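(* For all integers $M,N,p\ge1$, $$\delta_p(M,N)=\sum_{s=1}^{M}\sum_{t=1}^{N}\delta_p^{st}(M,N).$$
   Context: $P(p)$ is the set of partitions of $\{1,\dots,p\}$, $|\pi|$ the number of blocks, and $S_{ps}=\#\{\pi\in P(p):|\pi|=s\}$ (Stirling numbers). For $\pi,\sigma\in P(p)$, write $\pi\triangleright\sigma$ if for every block $\beta$ of $\pi$ and every block $\gamma$ of $\sigma$, $\#\{x:x\in\beta,x\in\gamma\}=\#\{x:x\in\beta,x+1\in\gamma\}$, indices modulo $p$. For $1\le s,t\le p$ let $\varepsilon_p(s,t)=\frac{\#\{(\pi,\sigma)\in P(p)^2:\pi\triangleright\sigma,|\pi|=s,|\sigma|=t\}}{S_{ps}S_{pt}}$ (the probability that $\pi\triangleright\sigma$ for uniformly random $\pi,\sigma$ with $s$ and $t$ blocks). Set $\delta_p^{st}(M,N)=\frac{M!}{(M-s)!}\cdot\frac{S_{ps}}{M^p}\cdot\frac{N!}{(N-t)!}\cdot\frac{S_{pt}}{N^p}\cdot\varepsilon_p(s,t)$ for $1\le s\le\min(M,p)$, $1\le t\le\min(N,p)$, and $\delta_p^{st}(M,N)=0$ otherwise. Also $\delta_p(M,N)=\frac{1}{(MN)^p}\#\{(a,b)\in\mathbb Z_M^p\times\mathbb Z_N^p:\{(a_y,b_y)\}_{y=1}^p=\{(a_y,b_{y+1})\}_{y=1}^p\text{ as multisets}\}$, with $b_{p+1}=b_1$. *)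

(* Elements 1..p are modelled by 'I_p (0..p-1); x+1 mod p is ordS. *)
From mathcomp Require Import all_boot all_order all_algebra.
Set Implicit Arguments. Unset Strict Implicit. Unset Printing Implicit Defensive.
Import GRing.Theory Num.Theory.
Local Open Scope ring_scope.

Definition setpart (p : nat) (P : {set {set 'I_p}}) : bool := partition P [set: 'I_p].

Definition Sps (p s : nat) : nat :=
  #|[set P : {set {set 'I_p}} | setpart P & #|P| == s]|.

Definition rel_tri (p : nat) (pi sigma : {set {set 'I_p}}) : bool :=
  [forall beta in pi, forall gamma in sigma,
     #|[set x | (x \in beta) && (x \in gamma)]| ==
     #|[set x | (x \in beta) && (ordS x \in gamma)]| ].

Definition eps (p s t : nat) : rat :=
  (#|[set PS : {set {set 'I_p}} * {set {set 'I_p}} |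
        [&& setpart PS.1, setpart PS.2, rel_tri PS.1 PS.2,
            #|PS.1| == s & #|PS.2| == t]]|)%:R
  / ((Sps p s)%:R * (Sps p t)%:R).

Definition delta_st (p s t M N : nat) : rat :=
  if [&& (1 <= s)%N, (s <= minn M p)%N, (1 <= t)%N & (t <= minn N p)%N] then
    (M ^_ s)%:R * (Sps p s)%:R / (M ^ p)%:R *
    ((N ^_ t)%:R * (Sps p t)%:R / (N ^ p)%:R) * eps p s t
  else 0.

Definition good (p M N : nat) (ab : {ffun 'I_p -> 'I_M} * {ffun 'I_p -> 'I_N}) : bool :=
  perm_eq [seq (ab.1 y, ab.2 y) | y : 'I_p] [seq (ab.1 y, ab.2 (ordS y)) | y : 'I_p].

Definition delta (p M N : nat) : rat :=
  (#|[set ab | @good p M N ab]|)%:R / ((M * N) ^ p)%:R.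

From mathcomp Require Import all_boot all_order all_algebra.
From mathcomp Require Import ring.
Set Implicit Arguments. Unset Strict Implicit. Unset Printing Implicit Defensive.

(* Group the pairs (a, b) by their kernel partitions (pi, sigma).  The multiset
   condition compares, for every pair of values (u, v), the sizes of
   a^-1(u) :&: b^-1(v) and a^-1(u) :&: (b \o succ)^-1(v); for values in the
   images these sets are exactly the intersections appearing in pi |> sigma, and
   otherwise both are empty, so the condition only depends on (pi, sigma).  A
   partition with s blocks is the kernel of exactly M^_s maps into Z_M (injective
   labellings of its blocks), hence
     #good = sum_(s, t) M^_s N^_t #{(pi, sigma) | pi |> sigma, |pi| = s, |sigma| = t},
   and the Stirling numbers in delta^st cancel against the denominator of eps. *)

Section KernelCount.
Variables (T R : finType) (P : {set {set T}}).
Hypothesis partP : partition P [set: T].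

Definition part_block := {B : {set T} | B \in P}.

Lemma mem_cover_partition x : x \in cover P.
Proof. by rewrite (cover_partition partP) inE. Qed.

Definition block_of x : part_block :=
  exist _ (pblock P x) (pblock_mem (mem_cover_partition x)).

Lemma block_ofE (B : part_block) x : x \in val B -> block_of x = B.
Proof.
by move=> xB; apply: val_inj; exact: def_pblock (partition_trivIset partP) (valP B) xB.
Qed.

Lemma part_block_nonempty (B : part_block) : exists x, x \in val B.
Proof. exact: set0Pn (partition_neq0 partP (valP B)). Qed.

Definition block_rep (B : part_block) : T := xchoose (part_block_nonempty B).

Lemma block_repP (B : part_block) : block_rep B \in val B.
Proof. exact: xchooseP. Qed.

Definition lift_blocks (g : {ffun part_block -> R}) : {ffun T -> R} :=
  [ffun x => g (block_of x)].

Lemma lift_blocks_inj : injective lift_blocks.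
Proof.
move=> g1 g2 /ffunP/(_ (block_rep _)) eq_g; apply/ffunP => B.
by have := eq_g B; rewrite !ffunE (block_ofE (block_repP B)).
Qed.

Lemma preim_partition_eqE (f : {ffun T -> R}) :
  (preim_partition f [set: T] == P) =
  (f \in lift_blocks @: [set g : {ffun part_block -> R} | injectiveb g]).
Proof.
have tiP := partition_trivIset partP.
apply/idP/imsetP => [/eqP kerf | [g]].
  have same_block x y : (y \in pblock P x) = (f x == f y).
    by rewrite -kerf pblock_equivalence_partition ?inE //; split=> // /eqP->.
  exists [ffun B => f (block_rep B)].
    rewrite inE; apply/injectiveP => B1 B2; rewrite !ffunE => /eqP.
    rewrite -same_block => sameB; apply: val_inj.
    rewrite -(def_pblock tiP (valP B1) (block_repP B1)).
    by rewrite -(def_pblock tiP (valP B2) (block_repP B2)) (same_pblock tiP sameB).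
  apply/ffunP => x; rewrite !ffunE; apply/eqP; rewrite -same_block.
  exact: block_repP (block_of x).
rewrite inE => /injectiveP inj_g ->; apply/eqP.
rewrite -[RHS](preim_partition_pblock partP).
apply: eq_imset => x; apply/setP => y.
by rewrite !inE !ffunE (inj_eq inj_g) -val_eqE.
Qed.

Lemma card_preim_partition_eq :
  #|[set f : {ffun T -> R} | preim_partition f [set: T] == P]| = #|R| ^_ #|P|.
Proof.
have -> : [set f : {ffun T -> R} | preim_partition f [set: T] == P] =
          lift_blocks @: [set g : {ffun part_block -> R} | injectiveb g].
  by apply/setP => f; rewrite inE preim_partition_eqE.
rewrite card_imset; last exact: lift_blocks_inj.
by rewrite card_inj_ffuns card_sig; congr (_ ^_ _); apply: eq_card.
Qed.

End KernelCount.

Lemma sum_ffun_preim_partition (T R : finType) (F : {set {set T}} -> nat) :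
  \sum_(f : {ffun T -> R}) F (preim_partition f [set: T]) =
  \sum_(P | partition P [set: T]) #|R| ^_ #|P| * F P.
Proof.
rewrite (partition_big (fun f : {ffun T -> R} => preim_partition f [set: T])
                      (fun P => partition P [set: T])) /=;
  last by move=> f _; exact: preim_partitionP.
apply: eq_bigr => P partP.
rewrite (eq_bigr (fun _ => 1 * F P)); last by move=> f /eqP ->; rewrite mul1n.
rewrite -big_distrl /= sum1dep_card -(card_preim_partition_eq R partP).
by congr (_ * _); apply: eq_card => f; rewrite !inE.
Qed.

Lemma card_partition_le (T : finType) (P : {set {set T}}) :
  partition P [set: T] -> (#|P| <= #|T|)%N.
Proof.
move=> partP; rewrite -cardsT (card_partition partP) -sum1_card.
by apply: leq_sum => A AP; rewrite card_gt0 (partition_neq0 partP AP).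
Qed.

Lemma card_partition_gt0 (T : finType) (P : {set {set T}}) :
  partition P [set: T] -> (0 < #|T|)%N -> (0 < #|P|)%N.
Proof.
move=> partP; rewrite -cardsT (card_partition partP).
case: (set_0Vmem P) => [-> | [A AP] _]; first by rewrite big_set0.
by apply/card_gt0P; exists A.
Qed.

Lemma count_pair_map (T : finType) (U V : eqType) (f : T -> U) (g : T -> V) u v :
  count_mem (u, v) [seq (f y, g y) | y : T] = #|[set y | (f y == u) && (g y == v)]|.
Proof.
rewrite count_map cardsE cardE size_filter enumT.
by apply: eq_count => y; rewrite /= xpair_eqE.
Qed.

Lemma good_rel_tri p M N (a : {ffun 'I_p -> 'I_M}) (b : {ffun 'I_p -> 'I_N}) :
  good (a, b) = rel_tri (preim_partition a [set: 'I_p]) (preim_partition b [set: 'I_p]).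
Proof.
pose meet (c : 'I_p -> 'I_p) u v := #|[set y | (a y == u) && (b (c y) == v)]|.
have goodE : good (a, b) <-> forall u v, meet id u v = meet (@ordS p) u v.
  rewrite /good /=; split => [/permP eq_count u v | eq_meet].
    by have := eq_count (pred1 (u, v)); rewrite !count_pair_map.
  by apply/allP => -[u v] _; rewrite /= !count_pair_map; apply/eqP; exact: eq_meet.
have triE : rel_tri (preim_partition a [set: 'I_p]) (preim_partition b [set: 'I_p])
    <-> forall x x', meet id (a x) (b x') = meet (@ordS p) (a x) (b x').
  have blockE c x x' :
      #|[set y | (y \in [set z in [set: 'I_p] | a x == a z])
                 && (c y \in [set z in [set: 'I_p] | b x' == b z])]| = meet c (a x) (b x').
    by apply: eq_card => y; rewrite !inE (eq_sym (a x)) (eq_sym (b x')).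
  split => [/forall_inP tri x x' | eq_meet].
    have /forall_inP/(_ _ (imset_f _ (in_setT x'))) := tri _ (imset_f _ (in_setT x)).
    by rewrite !blockE => /eqP.
  apply/forall_inP => _ /imsetP[x _ ->]; apply/forall_inP => _ /imsetP[x' _ ->].
  by rewrite !blockE eq_meet.
apply/idP/idP => [/goodE eq_meet | /triE eq_meet]; first by apply/triE.
apply/goodE => u v.
case: (pickP (fun x => a x == u)) => [x /eqP <- | no_u]; last first.
  by rewrite /meet !eq_card0 // => y; rewrite !inE no_u.
case: (pickP (fun x' => b x' == v)) => [x' /eqP <- | no_v]; first exact: eq_meet.
by rewrite /meet !eq_card0 // => y; rewrite !inE no_v andbF.
Qed.

Lemma partition_big_nat (I : finType) (P : pred I) (k : I -> nat) (F : I -> nat) lo hi :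
  \sum_(lo <= s < hi) \sum_(i | P i && (k i == s)) F i =
  \sum_(i | P i && (lo <= k i < hi)) F i.
Proof.
under eq_bigr do rewrite big_mkcondr.
rewrite exchange_big [RHS]big_mkcondr /=; apply: eq_bigr => i _.
by rewrite -big_mkcond /= (eq_bigl _ _ (fun s => eq_sym (k i) s)) big_nat1_eq.
Qed.

Lemma card_set_pair (T1 T2 : finType) (Q : pred (T1 * T2)) :
  #|[set x | Q x]| = \sum_i \sum_j (Q (i, j) : nat).
Proof.
rewrite -sum1dep_card pair_big /= big_mkcond; apply: eq_bigr => -[i j] _ /=.
by case: (Q _).
Qed.

Definition tri_pairs p s t :=
  #|[set PS : {set {set 'I_p}} * {set {set 'I_p}} |
     [&& setpart PS.1, setpart PS.2, rel_tri PS.1 PS.2, #|PS.1| == s & #|PS.2| == t]]|.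

Lemma tri_pairsE p s t :
  tri_pairs p s t = \sum_(P : {set {set 'I_p}} | setpart P && (#|P| == s))
                      \sum_(S | setpart S && (#|S| == t)) (rel_tri P S : nat).
Proof.
rewrite /tri_pairs card_set_pair [RHS]big_mkcond; apply: eq_bigr => P _ /=.
case: (setpart P) (#|P| == s) => [] [] /=; try by apply: big1 => S _; rewrite ?andbF.
rewrite [RHS]big_mkcond; apply: eq_bigr => S _ /=.
by case: (setpart S) (#|S| == t) (rel_tri P S) => [] [] [].
Qed.

Lemma sum_setpart_ffact p m (F : {set {set 'I_p}} -> nat) : (0 < p)%N ->
  \sum_(P | setpart P && (1 <= #|P| < m.+1)) m ^_ #|P| * F P =
  \sum_(P | setpart P) m ^_ #|P| * F P.
Proof.
move=> p_gt0; rewrite big_mkcondr; apply: eq_bigr => P partP /=.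
rewrite card_partition_gt0 ?card_ord //= ltnS.
by case: leqP => // /ffact_small ->.
Qed.

Lemma card_good p M N : (0 < p)%N ->
  #|[set ab | @good p M N ab]| =
  \sum_(1 <= s < M.+1) \sum_(1 <= t < N.+1) M ^_ s * N ^_ t * tri_pairs p s t.
Proof.
move=> p_gt0.
pose tri_sum (P : {set {set 'I_p}}) :=
  \sum_(S | setpart S) N ^_ #|S| * (rel_tri P S : nat).
have ->: #|[set ab | @good p M N ab]| = \sum_(P | setpart P) M ^_ #|P| * tri_sum P.
  rewrite card_set_pair.
  under eq_bigr => a _ do under eq_bigr => b _ do rewrite good_rel_tri.
  transitivity (\sum_(a : {ffun 'I_p -> 'I_M}) tri_sum (preim_partition a [set: 'I_p])).
    apply: eq_bigr => a _.
    by rewrite (sum_ffun_preim_partition _ (rel_tri (preim_partition a [set: 'I_p]))) card_ord.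
  by rewrite (sum_ffun_preim_partition _ tri_sum) card_ord.
have termE s t : M ^_ s * N ^_ t * tri_pairs p s t =
    \sum_(P : {set {set 'I_p}} | setpart P && (#|P| == s))
       M ^_ #|P| * \sum_(S | setpart S && (#|S| == t)) N ^_ #|S| * (rel_tri P S : nat).
  rewrite tri_pairsE [LHS]big_distrr /=; apply: eq_bigr => P /andP[_ /eqP ->].
  rewrite -mulnA [in LHS]big_distrr /=; congr (_ * _).
  by apply: eq_bigr => S /andP[_ /eqP ->].
rewrite -(sum_setpart_ffact M _ p_gt0) -partition_big_nat; apply: eq_bigr => s _.
under [RHS]eq_bigr do rewrite termE.
rewrite exchange_big; apply: eq_bigr => P _; rewrite -big_distrr.
by rewrite partition_big_nat sum_setpart_ffact.
Qed.

Lemma Sps_eq0 p s : (p < s)%N -> Sps p s = 0%N.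
Proof.
move=> p_lt_s; apply: eq_card0 => P; rewrite !inE.
apply/andP => -[/card_partition_le]; rewrite card_ord => P_le_p /eqP P_eq_s.
by move: p_lt_s; rewrite -P_eq_s ltnNge P_le_p.
Qed.

Lemma tri_pairs_le p s t : (tri_pairs p s t <= Sps p s * Sps p t)%N.
Proof.
rewrite /Sps -cardsX; apply: subset_leq_card; apply/subsetP => -[P S].
by rewrite !inE /= => /and5P[-> -> _ -> ->].
Qed.

Import GRing.Theory Num.Theory.
Local Open Scope ring_scope.

Lemma delta_stE p s t M N : (0 < s <= M)%N -> (0 < t <= N)%N ->
  delta_st p s t M N = (M ^_ s * N ^_ t * tri_pairs p s t)%:R / ((M * N) ^ p)%:R.
Proof.
move=> /andP[s_gt0 s_le_M] /andP[t_gt0 t_le_N].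
rewrite /delta_st /eps -/(tri_pairs p s t).
(* If a Stirling factor vanishes, eps is a division by 0, i.e. 0, and so is tri_pairs. *)
have [Sps0 | ] := (Sps p s * Sps p t =P 0)%N.
  have /eqP tri0 : tri_pairs p s t == 0%N by rewrite -leqn0 -Sps0 tri_pairs_le.
  by rewrite tri0 muln0 !mul0r mulr0; case: ifP.
move/eqP; rewrite muln_eq0 => /norP[Sps_s Sps_t].
have s_le_p : (s <= p)%N by rewrite leqNgt; apply: contra Sps_s => /Sps_eq0 ->.
have t_le_p : (t <= p)%N by rewrite leqNgt; apply: contra Sps_t => /Sps_eq0 ->.
rewrite !leq_min s_gt0 s_le_M s_le_p t_gt0 t_le_N t_le_p /=.
have M_gt0 : (0 < M)%N := leq_trans s_gt0 s_le_M.
have N_gt0 : (0 < N)%N := leq_trans t_gt0 t_le_N.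
rewrite expnMn !natrM; field.
by rewrite !pnatr_eq0 -!lt0n !expn_gt0 M_gt0 N_gt0 !lt0n Sps_s Sps_t.
Qed.

Theorem proposition7p3 (M N p : nat) :
  (1 <= M)%N -> (1 <= N)%N -> (1 <= p)%N ->
  delta p M N = \sum_(1 <= s < M.+1) \sum_(1 <= t < N.+1) delta_st p s t M N.
Proof.
move=> _ _ p_gt0.
rewrite /delta card_good // natr_sum mulr_suml; apply: eq_big_nat => s s_range.
rewrite natr_sum mulr_suml; apply: eq_big_nat => t t_range.
by rewrite delta_stE.
Qed.
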